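(* Let $\Theta$ be a parameter space, let $L(\boldsymbol{\theta}\mid D)$ and $L(\boldsymbol{\theta}\mid D_0)$ be the (positive) likelihood functions of the current data $D$ and the historical data $D_0$, let $\pi_0$ be an initial prior density on $\Theta$, let $\xi\in[0,1]$ and let $\alpha\in\mathbb{R}\setminus\{-1,1\}$. Put $$p_0(\boldsymbol{\theta})=L(\boldsymbol{\theta}\mid D)\pi_0(\boldsymbol{\theta}),\qquad p_1(\boldsymbol{\theta})=L(\boldsymbol{\theta}\mid D)L(\boldsymbol{\theta}\mid D_0)\pi_0(\boldsymbol{\theta}),$$ and assume $0<\int_\Theta\{(1-\xi)p_0(\boldsymbol{\theta})^{\frac{1+\alpha}{2}}+\xi p_1(\boldsymbol{\theta})^{\frac{1+\alpha}{2}}\}^{\frac{2}{1+\alpha}}d\boldsymbol{\theta}<\infty$. Then the generalized power posterior $$g^*(\boldsymbol{\theta})=\frac{\left\{(1-\xi)p_0(\boldsymbol{\theta})^{\frac{1+\alpha}{2}}+\xi p_1(\boldsymbol{\theta})^{\frac{1+\alpha}{2}}\right\}^{\frac{2}{1+\alpha}}}{\int_\Theta\left\{(1-\xi)p_0(\boldsymbol{\theta}')^{\frac{1+\alpha}{2}}+\xi p_1(\boldsymbol{\theta}')^{\frac{1+\alpha}{2}}\right\}^{\frac{2}{1+\alpha}}d\boldsymbol{\theta}'}$$ is the minimizer of $(1-\xi)D_\alpha[g\,\|\,p_0]+\xi D_\alpha[g\,\|\,p_1]$ over all probability densities $g\ge 0$ on $\Theta$ with $\int_\Theta g(\boldsy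mbol{\theta})d\boldsymbol{\theta}=1$.
   Context: Amari's $\alpha$-divergence between nonnegative functions $p,q$ on $\Theta$ is $D_\alpha[p\,\|\,q]=\frac{4}{1-\alpha^2}\left(1-\int_\Theta p(\boldsymbol{\theta})^{\frac{1-\alpha}{2}}q(\boldsymbol{\theta})^{\frac{1+\alpha}{2}}d\boldsymbol{\theta}\right)$. Here $p_0,p_1$ are the (unnormalized) pseudo-posteriors corresponding to ignoring ($\xi=0$) and fully using ($\xi=1$) the historical data in the power prior $\pi(\boldsymbol{\theta}\mid D_0,\xi)\propto L(\boldsymbol{\theta}\mid D_0)^\xi\pi_0(\boldsymbol{\theta})$. *)

From HB Require Import structures.
From mathcomp Require Import all_boot all_order all_algebra.
From mathcomp Require Import all_classical all_reals all_analysis.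
Set Implicit Arguments. Unset Strict Implicit. Unset Printing Implicit Defensive.
Import Order.TTheory GRing.Theory Num.Theory.
Local Open Scope ring_scope.

Section defs.
Context {R : realType} {d : measure_display} {T : measurableType d}.

Definition epow (x r : R) : \bar R :=
  if x == 0 then (if r < 0 then +oo%E else if r == 0 then 1%E else 0%E)
  else (powR x r)%:E.

Definition alpha_div (mu : {measure set T -> \bar R}) (alpha : R) (p q : T -> R)
  : \bar R :=
  ((4 / (1 - alpha ^+ 2))%:E *
    (1 - \int[mu]_t (epow (p t) ((1 - alpha) / 2) * epow (q t) ((1 + alpha) / 2))))%E.

Definition pseudo_post0 (LD pi0 : T -> R) : T -> R := fun t => LD t * pi0 t.
Definition pseudo_post1 (LD LD0 pi0 : T -> R) : T -> R :=
  fun t => LD t * LD0 t * pi0 t.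

Definition gen_mix (xi alpha : R) (p0 p1 : T -> R) : T -> R := fun t =>
  powR ((1 - xi) * powR (p0 t) ((1 + alpha) / 2)
        + xi * powR (p1 t) ((1 + alpha) / 2)) (2 / (1 + alpha)).

Definition gen_power_post (mu : {measure set T -> \bar R}) (xi alpha : R)
  (p0 p1 : T -> R) : T -> R := fun t =>
  gen_mix xi alpha p0 p1 t / fine (\int[mu]_s (gen_mix xi alpha p0 p1 s)%:E).

Definition pp_objective (mu : {measure set T -> \bar R}) (xi alpha : R)
  (p0 p1 g : T -> R) : \bar R :=
  ((1 - xi)%:E * alpha_div mu alpha g p0 + xi%:E * alpha_div mu alpha g p1)%E.

End defs.

From HB Require Import structures.
From mathcomp Require Import all_boot all_order all_algebra.
From mathcomp Require Import all_classical all_reals all_analysis.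
From mathcomp Require Import measurable_realfun ring lra.
Set Implicit Arguments. Unset Strict Implicit. Unset Printing Implicit Defensive.
Import Order.TTheory GRing.Theory Num.Theory.
Local Open Scope ring_scope.

(* Write s = (1 - alpha) / 2 and r = (1 + alpha) / 2, so that s + r = 1 and
   4 / (1 - alpha^2) = 1 / (s r).  Pointwise, (1 - xi) p0^r + xi p1^r = m^r
   for the unnormalised mixture m = Z g*, hence the objective equals
   (1 - Z^r int g^s g*^r) / (s r).  When s, r > 0 Young's inequality
   g^s g*^r <= s g + r g* gives int g^s g*^r <= 1 = int g*^s g*^r, and when
   s < 0 or r < 0 its reverse form gives int g^s g*^r >= 1; in both cases the
   sign of 1 / (s r) turns this into the minimality of g*. *)

Section powR_young.
Variable R : realType.
Implicit Types x u s r : R.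

Lemma powR_young x u s r : 0 <= x -> 0 <= u -> 0 < s -> 0 < r -> s + r = 1 ->
  x `^ s * u `^ r <= s * x + r * u.
Proof.
move=> x0 u0 s0 r0 sr.
have := @conjugate_powR R (x `^ s) (u `^ r) s^-1 r^-1
  (powR_ge0 _ _) (powR_ge0 _ _).
rewrite !invr_gt0 !invrK sr => /(_ s0 r0 erefl).
by rewrite -!powRrM !mulfV ?gt_eqF // !powRr1 // (mulrC x) (mulrC u).
Qed.

(* Young's inequality for [x ^ s * u ^ r] and [x] with the weights [1 / r] and
   [- s / r], both positive because [r = 1 - s > 1]. *)
Lemma powR_rev_young x u s r : 0 < x -> 0 <= u -> s < 0 -> s + r = 1 ->
  r * u <= x `^ s * u `^ r - s * x.
Proof.
move=> x0 u0 s0 sr; have r0 : 0 < r by lra.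
have r_neq0 : r != 0 by rewrite gt_eqF.
have uE : (x `^ s * u `^ r) `^ r^-1 * x `^ (- s / r) = u.
  rewrite powRM ?powR_ge0 // -!powRrM mulfV // powRr1 // mulrAC -powRD.
    by rewrite mulNr addrN powRr0 mul1r.
  by rewrite (gt_eqF x0) implybT.
have := @powR_young (x `^ s * u `^ r) x r^-1 (- s / r)
  (mulr_ge0 (powR_ge0 _ _) (powR_ge0 _ _)) (ltW x0).
rewrite invr_gt0 r0 divr_gt0 ?oppr_gt0 // uE => /(_ erefl erefl).
have -> : r^-1 + - s / r = 1.
  by rewrite -{1}[r^-1]mul1r -mulrDl (_ : 1 - s = r) ?divff //; lra.
move=> /(_ erefl) /(ler_wpM2l (ltW r0)).
suff -> : r * (r^-1 * (x `^ s * u `^ r) + - s / r * x) =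
  x `^ s * u `^ r - s * x by [].
by field.
Qed.

End powR_young.

Section epow.
Variable R : realType.
Implicit Types x u e s r : R.
Local Open Scope ereal_scope.

Lemma gt0_epow x e : (0 < x)%R -> epow x e = (x `^ e)%:E.
Proof. by move=> x0; rewrite /epow gt_eqF. Qed.

Lemma epow0_gt0 e : (0 < e)%R -> epow 0 e = 0.
Proof. by move=> e0; rewrite /epow eqxx ltNge (ltW e0) /= gt_eqF. Qed.

Lemma epow0_lt0 e : (e < 0)%R -> epow 0 e = +oo.
Proof. by move=> e0; rewrite /epow eqxx e0. Qed.

Lemma epow_ge0 x e : 0 <= epow x e.
Proof.
rewrite /epow; case: ifP => _; last by rewrite lee_fin powR_ge0.
by case: ifP => //; case: ifP.
Qed.

Lemma epow_mul_ge0 x u s r : 0 <= epow x s * epow u r.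
Proof. by apply: mule_ge0; exact: epow_ge0. Qed.

Lemma epowM x u e : (0 < x)%R -> (0 <= u)%R -> e != 0%R ->
  epow (x * u) e = (x `^ e)%:E * epow u e.
Proof.
move=> x0; rewrite le_eqVlt => /predU1P[<-|u0] e0; last first.
  by rewrite !gt0_epow ?mulr_gt0 // powRM ?ltW.
rewrite mulr0; have [e_lt0|e_gt0] := ltP e 0%R.
  by rewrite epow0_lt0 // gt0_muley ?lte_fin ?powR_gt0.
by rewrite epow0_gt0 ?mule0 // lt_neqAle eq_sym e0.
Qed.

Lemma epow_mul_conj u s r : (0 <= u)%R -> (s + r = 1)%R ->
  epow u s * epow u r = u%:E.
Proof.
rewrite le_eqVlt => /predU1P[<- sr|u0 sr]; last first.
  by rewrite !gt0_epow // -EFinM -powRD ?sr ?powRr1 ?ltW // gt_eqF // implybT.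
have [s_gt0|s_le0] := ltP 0%R s; first by rewrite epow0_gt0 // mul0e.
by rewrite (@epow0_gt0 r) ?mule0 //; lra.
Qed.

Lemma epow_young x u s r : (0 <= x)%R -> (0 <= u)%R -> (0 < s)%R -> (0 < r)%R ->
  (s + r = 1)%R -> epow x s * epow u r <= (s * x + r * u)%:E.
Proof.
rewrite le_eqVlt => /predU1P[<- u0 s0 r0 _|x0].
  by rewrite epow0_gt0 // mul0e mulr0 add0r lee_fin mulr_ge0 // ltW.
rewrite le_eqVlt => /predU1P[<- s0 r0 _|u0 s0 r0 sr].
  by rewrite epow0_gt0 // mule0 mulr0 addr0 lee_fin mulr_ge0 // ltW.
by rewrite !gt0_epow // -EFinM lee_fin powR_young // ltW.
Qed.

Lemma epow_rev_young x u s r : (0 <= x)%R -> (0 <= u)%R -> (s < 0)%R ->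
  (s + r = 1)%R -> (r * u)%:E <= epow x s * epow u r + (- s * x)%:E.
Proof.
move=> + + s0 sr; have r0 : (0 < r)%R by lra.
rewrite le_eqVlt => /predU1P[<-|x0] u0.
  rewrite epow0_lt0 //; move: u0; rewrite le_eqVlt => /predU1P[<-|u0].
    by rewrite epow0_gt0 // mule0 !mulr0 add0e.
  by rewrite gt0_epow // gt0_mulye ?lte_fin ?powR_gt0 // addye // leey.
move: u0; rewrite le_eqVlt => /predU1P[<-|u0].
  by rewrite epow0_gt0 // mule0 add0e mulr0 lee_fin mulr_ge0 //; lra.
by rewrite !gt0_epow // -EFinM -EFinD lee_fin mulNr powR_rev_young // ltW.
Qed.

Lemma measurable_epow d (T : measurableType d) (f : T -> R) e :
  measurable_fun setT f -> measurable_fun setT (fun t => epow (f t) e : \bar R).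
Proof.
move=> mf; apply: measurable_fun_ifT.
- exact: measurable_fun_eqr mf (measurable_cst _).
- exact: measurable_cst.
- by apply/measurable_EFinP; apply: (measurableT_comp (measurable_powR _)).
Qed.

Lemma epow_mix xi r x0 x1 : (0 <= xi <= 1)%R -> r != 0%R ->
  (x0 = 0 /\ x1 = 0 \/ 0 < x0 /\ 0 < x1)%R ->
  (1 - xi)%:E * epow x0 r + xi%:E * epow x1 r =
  epow (((1 - xi) * x0 `^ r + xi * x1 `^ r) `^ r^-1) r.
Proof.
move=> /andP[xi0 xi1] r0 [[-> ->]|[x0_gt0 x1_gt0]]; last first.
  have M_gt0 : (0 < (1 - xi) * x0 `^ r + xi * x1 `^ r)%R.
    by have := powR_gt0 r x0_gt0; have := powR_gt0 r x1_gt0; nra.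
  by rewrite !gt0_epow ?powR_gt0 // -powRrM mulVf // powRr1 ?ltW.
rewrite powR0 // !mulr0 addr0 powR0 ?invr_eq0 //.
have [r_lt0|r_ge0] := ltP r 0%R; last first.
  by rewrite epow0_gt0 ?mule0 ?adde0 // lt_neqAle eq_sym r0.
rewrite epow0_lt0 //; have [xi_lt1|xi_ge1] := ltP xi 1%R.
  rewrite gt0_muley ?lte_fin ?subr_gt0 // addye //.
  by rewrite -ltNye (lt_le_trans ltNy0) // mule_ge0 // lee_fin.
have -> : xi = 1%R by apply/eqP; rewrite eq_le xi1.
by rewrite subrr mul0e add0e mul1e.
Qed.

End epow.

Section ereal_arith.
Variable R : realType.
Local Open Scope ereal_scope.

Lemma conv_mule1B (c xi : R) (J0 J1 : \bar R) :
  (0 <= xi <= 1)%R -> 0 <= J0 -> 0 <= J1 ->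
  (1 - xi)%:E * (c%:E * (1 - J0)) + xi%:E * (c%:E * (1 - J1)) =
  c%:E * (1 - ((1 - xi)%:E * J0 + xi%:E * J1)).
Proof.
move=> /andP[xi0 xi1] J00 J10.
have A0 : 0 <= (1 - xi)%:E * J0 by rewrite mule_ge0 // lee_fin subr_ge0.
have B0 : 0 <= xi%:E * J1 by rewrite mule_ge0 // lee_fin.
rewrite muleCA [xi%:E * _]muleCA -muleDr //; last first.
  rewrite !muleBr ?mule1 //; move: A0 B0.
  by case: (_ * J0) => [a| |] //; case: (_ * J1) => [b| |].
congr (_ * _); rewrite !muleBr ?mule1 //; move: A0 B0.
case: (_ * J0) => [a| |] //; case: (_ * J1) => [b| |] // _ _.
by congr EFin; lra.
Qed.

Lemma lee_mul1B (c K : R) (I : \bar R) : (0 < K)%R ->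
  (0 < c)%R /\ I <= 1 \/ (c < 0)%R /\ 1 <= I ->
  c%:E * (1 - K%:E) <= c%:E * (1 - K%:E * I).
Proof.
move=> K0 [[c0 I1]|[c0 I1]].
  apply: lee_wpmul2l; first by rewrite lee_fin ltW.
  by apply: leeB => //; rewrite -[leRHS]mule1 lee_wpmul2l // lee_fin ltW.
rewrite -(opprK c) EFinN !mulNe leeN2.
apply: lee_wpmul2l; first by rewrite lee_fin oppr_ge0 ltW.
by apply: leeB => //; rewrite -[leLHS]mule1 lee_wpmul2l // lee_fin ltW.
Qed.

End ereal_arith.

Section density.
Context {R : realType} {d : measure_display} {T : measurableType d}.
Variable mu : {measure set T -> \bar R}.
Local Open Scope ereal_scope.

Definition is_density (f : T -> R) :=
  [/\ measurable_fun setT f, forall t, (0 <= f t)%R & \int[mu]_t (f t)%:E = 1].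

Lemma ge0_integralZl_real (k : R) (f : T -> R) : (0 <= k)%R ->
  measurable_fun setT f -> (forall t, 0 <= f t)%R ->
  \int[mu]_t (k * f t)%:E = k%:E * \int[mu]_t (f t)%:E.
Proof.
move=> k0 mf f0; under eq_integral do rewrite EFinM.
rewrite ge0_integralZl_EFin //; first by move=> t _; rewrite lee_fin.
exact/measurable_EFinP.
Qed.

Lemma is_densityZl (k : R) (f : T -> R) : (0 <= k)%R -> is_density f ->
  \int[mu]_t (k * f t)%:E = k%:E.
Proof. by move=> k0 [mf f0 If]; rewrite ge0_integralZl_real // If mule1. Qed.

Lemma measurable_epow_mul (f h : T -> R) s r :
  measurable_fun setT f -> measurable_fun setT h ->
  measurable_fun setT (fun t => epow (f t) s * epow (h t) r).
Proof. by move=> mf mh; apply: emeasurable_funM; exact: measurable_epow. Qed.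

Lemma integral_young_le1 (f h : T -> R) s r : is_density f -> is_density h ->
  (0 < s)%R -> (0 < r)%R -> (s + r = 1)%R ->
  \int[mu]_t (epow (f t) s * epow (h t) r) <= 1.
Proof.
move=> df dh s0 r0 sr; case: (df) (dh) => [mf f0 _] [mh h0 _].
have mZ (k : R) (g : T -> R) : measurable_fun setT g ->
    measurable_fun setT (fun t => (k * g t)%:E).
  by move=> mg; apply/measurable_EFinP; apply: measurable_funM.
have young : \int[mu]_t (epow (f t) s * epow (h t) r) <=
    \int[mu]_t ((s * f t)%:E + (r * h t)%:E).
  apply: ge0_le_integral => //.
  - by move=> t _; exact: epow_mul_ge0.
  - exact: measurable_epow_mul.
  - by apply: emeasurable_funD; exact: mZ.
  - by move=> t _; rewrite -EFinD epow_young.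
apply: le_trans young _; rewrite ge0_integralD //; last 4 first.
- by move=> t _; rewrite lee_fin mulr_ge0 // ltW.
- exact: mZ.
- by move=> t _; rewrite lee_fin mulr_ge0 // ltW.
- exact: mZ.
by rewrite (is_densityZl (ltW s0) df) (is_densityZl (ltW r0) dh) -EFinD sr.
Qed.

Lemma integral_rev_young_ge1 (f h : T -> R) s r :
  is_density f -> is_density h ->
  (s < 0)%R -> (s + r = 1)%R ->
  1 <= \int[mu]_t (epow (f t) s * epow (h t) r).
Proof.
move=> df dh s0 sr; case: (df) (dh) => [mf f0 _] [mh h0 _].
have r0 : (0 <= r)%R by lra.
have Ns0 : (0 <= - s)%R by lra.
have mNsf : measurable_fun setT (fun t => (- s * f t)%:E).
  by apply/measurable_EFinP; apply: measurable_funM.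
have rev_young : \int[mu]_t ((r * h t)%:E) <=
    \int[mu]_t (epow (f t) s * epow (h t) r + (- s * f t)%:E).
  apply: ge0_le_integral => //.
  - by move=> t _; rewrite lee_fin mulr_ge0.
  - by apply/measurable_EFinP; apply: measurable_funM.
  - by apply: emeasurable_funD => //; exact: measurable_epow_mul.
  - by move=> t _; exact: epow_rev_young.
move: rev_young; rewrite ge0_integralD //; last 3 first.
- by move=> t _; exact: epow_mul_ge0.
- exact: measurable_epow_mul.
- by move=> t _; rewrite lee_fin mulr_ge0.
rewrite (is_densityZl r0 dh) (is_densityZl Ns0 df) -leeBlDr //.
by rewrite -EFinB opprK addrC sr.
Qed.

End density.

Section gen_mix.
Context {R : realType} {d : measure_display} {T : measurableType d}.
Implicit Types (xi alpha : R) (p q : T -> R).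

(* Needed for the pointwise identity [epow_mix]: for [r < 0] a zero of only
   one of the two pseudo-posteriors would contribute [+oo] to the left-hand
   side and not to the right-hand side. *)
Definition same_support p q :=
  forall t, p t = 0 /\ q t = 0 \/ 0 < p t /\ 0 < q t.

Lemma pseudo_post_same_support (LD LD0 pi0 : T -> R) :
  (forall t, 0 < LD t) -> (forall t, 0 < LD0 t) -> (forall t, 0 <= pi0 t) ->
  same_support (pseudo_post0 LD pi0) (pseudo_post1 LD LD0 pi0).
Proof.
move=> LD_gt0 LD0_gt0 pi0_ge0 t; rewrite /pseudo_post0 /pseudo_post1.
have [->|pi0_neq0] := eqVneq (pi0 t) 0; first by left; rewrite !mulr0.
have pi0_gt0 : 0 < pi0 t by rewrite lt_neqAle eq_sym pi0_neq0 pi0_ge0.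
by right; rewrite !mulr_gt0.
Qed.

Lemma measurable_gen_mix xi alpha p q : measurable_fun setT p ->
  measurable_fun setT q -> measurable_fun setT (gen_mix xi alpha p q).
Proof.
move=> mp mq; apply: measurableT_comp (measurable_powR _) _.
by apply: measurable_funD; apply: measurable_funM => //;
  exact: measurableT_comp (measurable_powR _) _.
Qed.

End gen_mix.

Section gen_power_post.
Context {R : realType} {d : measure_display} {T : measurableType d}.
Variable mu : {measure set T -> \bar R}.
Variables (xi alpha : R) (p0 p1 : T -> R).
Hypothesis xi01 : 0 <= xi <= 1.
Hypotheses (alpha_neq1 : alpha != 1) (alpha_neqN1 : alpha != -1).
Hypotheses (mp0 : measurable_fun setT p0) (mp1 : measurable_fun setT p1).
Hypothesis p01 : same_support p0 p1.
Hypothesis mix_fin : (0 < \int[mu]_t (gen_mix xi alpha p0 p1 t)%:E < +oo)%E.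

Local Notation m := (gen_mix xi alpha p0 p1).
Local Notation gs := (gen_power_post mu xi alpha p0 p1).
Let s := (1 - alpha) / 2.
Let r := (1 + alpha) / 2.
Let Z := fine (\int[mu]_t (m t)%:E).

Let sr : s + r = 1. Proof. by rewrite /s /r; lra. Qed.

Let s_neq0 : s != 0.
Proof. by apply: contra_neq alpha_neq1; rewrite /s => ?; lra. Qed.

Let r_neq0 : r != 0.
Proof. by apply: contra_neq alpha_neqN1; rewrite /r => ?; lra. Qed.

Let integral_mix : (\int[mu]_t (m t)%:E = Z%:E)%E.
Proof.
by case/andP: mix_fin => m_gt0 m_fin; rewrite fineK // ge0_fin_numE ?ltW.
Qed.

Let Z_gt0 : 0 < Z.
Proof. by rewrite -lte_fin -integral_mix; case/andP: mix_fin. Qed.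

Lemma gen_power_post_density : is_density mu gs.
Proof.
have mm := measurable_gen_mix xi alpha mp0 mp1.
split=> [|t|]; first exact: measurable_funM.
  by rewrite divr_ge0 ?powR_ge0 // ltW.
under eq_integral do rewrite /gen_power_post -/Z mulrC.
rewrite ge0_integralZl_real ?invr_ge0 1?ltW //;
  last by move=> t; exact: powR_ge0.
have -> : (\int[mu]_t (m t)%:E = Z%:E)%E by exact: integral_mix.
by rewrite -EFinM mulVf ?gt_eqF.
Qed.

Lemma epow_gen_mix t : (epow (m t) r =
  (1 - xi)%:E * epow (p0 t) r + xi%:E * epow (p1 t) r)%E.
Proof.
rewrite /gen_mix (_ : 2 / (1 + alpha) = r^-1) -/r ?epow_mix //.
by rewrite /r invf_div.
Qed.

Lemma epow_gen_mix_post t : (epow (m t) r = (Z `^ r)%:E * epow (gs t) r)%E.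
Proof.
rewrite -epowM ?divr_ge0 ?powR_ge0 1?ltW //.
by rewrite /gen_power_post -/Z mulrC divfK ?gt_eqF.
Qed.

Lemma pp_objectiveE (h : T -> R) :
  measurable_fun setT h -> (forall t, 0 <= h t) ->
  (pp_objective mu xi alpha p0 p1 h = (4 / (1 - alpha ^+ 2))%:E *
    (1 - (Z `^ r)%:E * \int[mu]_t (epow (h t) s * epow (gs t) r)))%E.
Proof.
move=> mh h0; have /andP[xi0 xi1] := xi01.
have mp0r := measurable_epow_mul s r mh mp0.
have mp1r := measurable_epow_mul s r mh mp1.
have epow_sr_ge0 x u : (0 <= epow x s * epow u r)%E by exact: epow_mul_ge0.
rewrite /pp_objective /alpha_div -/s -/r conv_mule1B //; last 2 first.
- by apply: integral_ge0 => t _.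
- by apply: integral_ge0 => t _.
congr (_ * (1 - _))%E.
have [mgs _ _] := gen_power_post_density.
rewrite -!ge0_integralZl ?lee_fin ?subr_ge0 ?powR_ge0 //;
  last exact: measurable_epow_mul.
rewrite -ge0_integralD //; last 4 first.
- by move=> t _; rewrite mule_ge0 // lee_fin subr_ge0.
- exact: emeasurable_funM.
- by move=> t _; rewrite mule_ge0 // lee_fin.
- exact: emeasurable_funM.
apply: eq_integral => t _.
rewrite muleCA [(xi%:E * _)%E]muleCA.
rewrite -ge0_muleDr ?mule_ge0 ?lee_fin ?subr_ge0 ?epow_ge0 //.
by rewrite -epow_gen_mix epow_gen_mix_post muleCA.
Qed.

Theorem gen_power_post_min (g : T -> R) : is_density mu g ->
  (pp_objective mu xi alpha p0 p1 gs <= pp_objective mu xi alpha p0 p1 g)%E.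
Proof.
move=> dg; have dgs := gen_power_post_density.
case: (dg) (dgs) => [mg g0 _] [mgs gs0 igs].
have self : (\int[mu]_t (epow (gs t) s * epow (gs t) r) = 1)%E.
  by rewrite -igs; apply: eq_integral => t _; exact: epow_mul_conj (gs0 t) sr.
have coefE : 4 / (1 - alpha ^+ 2) = (s * r)^-1.
  by rewrite -invf_div; congr (_^-1); rewrite /s /r; field.
rewrite (pp_objectiveE mgs gs0) (pp_objectiveE mg g0) self mule1 coefE.
apply: lee_mul1B; first exact: powR_gt0.
rewrite invr_gt0 invr_lt0.
have [s_lt0|s_ge0] := ltP s 0.
  right; split; last exact: integral_rev_young_ge1.
  by rewrite nmulr_rlt0 // /r; move: s_lt0; rewrite /s; lra.
have s_gt0 : 0 < s by rewrite lt_neqAle eq_sym s_neq0.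
have [r_lt0|r_ge0] := ltP r 0.
  right; split; first by rewrite pmulr_rlt0.
  under eq_integral do rewrite muleC.
  by apply: integral_rev_young_ge1; rewrite // addrC.
have r_gt0 : 0 < r by rewrite lt_neqAle eq_sym r_neq0.
by left; split; [exact: mulr_gt0|exact: integral_young_le1].
Qed.

End gen_power_post.

Theorem mainTheorem1 (R : realType) (d : measure_display) (T : measurableType d)
  (mu : {measure set T -> \bar R}) (LD LD0 pi0 : T -> R) (xi alpha : R) :
  measurable_fun setT LD -> measurable_fun setT LD0 -> measurable_fun setT pi0 ->
  (forall t, 0 < LD t) -> (forall t, 0 < LD0 t) -> (forall t, 0 <= pi0 t) ->
  0 <= xi <= 1 -> alpha != 1 -> alpha != -1 ->
  (0 < \int[mu]_t (gen_mix xi alpha (pseudo_post0 LD pi0)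
                      (pseudo_post1 LD LD0 pi0) t)%:E < +oo)%E ->
  let p0 := pseudo_post0 LD pi0 in
  let p1 := pseudo_post1 LD LD0 pi0 in
  let gs := gen_power_post mu xi alpha p0 p1 in
  [/\ measurable_fun setT gs, (forall t, 0 <= gs t),
      (\int[mu]_t (gs t)%:E = 1)%E &
      forall g : T -> R, measurable_fun setT g -> (forall t, 0 <= g t) ->
        (\int[mu]_t (g t)%:E = 1)%E ->
        (pp_objective mu xi alpha p0 p1 gs <= pp_objective mu xi alpha p0 p1 g)%E].
Proof.
move=> mLD mLD0 mpi0 LD_gt0 LD0_gt0 pi0_ge0 xi01 a1 aN1 mix_fin p0 p1 gs.
have mp0 : measurable_fun setT p0 by exact: measurable_funM.
have mp1 : measurable_fun setT p1.
  by apply: measurable_funM => //; exact: measurable_funM.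
have p01 := pseudo_post_same_support LD_gt0 LD0_gt0 pi0_ge0.
have [mgs gs0 igs] := gen_power_post_density mp0 mp1 mix_fin.
split=> [|||g mg g0 ig]; [exact: mgs|exact: gs0|exact: igs|].
exact: gen_power_post_min xi01 a1 aN1 mp0 mp1 p01 mix_fin g (And3 mg g0 ig).
Qed.
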